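(* If a square matrix $A$ has a $k\times k$ principal submatrix $A[\kappa]$ that is an invertible, Hurwitz-unstable $P^-_0$ matrix and that has a Hurwitz-stable $(k-1)\times(k-1)$ principal submatrix, then $A$ is $D$-Hopf.
   Context: Hurwitz-stable: all eigenvalues have negative real part; Hurwitz-unstable: at least one eigenvalue has positive real part. $P^-_0$ matrix: every nonzero $j\times j$ principal minor has sign $(-1)^j$. Inertia: numbers of eigenvalues with negative, positive, zero real part. $A$ is $D$-Hopf if there exist an invertible principal submatrix $A[\kappa']$ and positive diagonal $D_1,D_2$ with $\operatorname{inertia}(A[\kappa']D_1)\ne\operatorname{inertia}(A[\kappa']D_2)$. *)

From HB Require Import structures.
From mathcomp Require Import all_boot all_order all_algebra.
From mathcomp Require Import complex.
From mathcomp Require Import reals.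
Set Implicit Arguments. Unset Strict Implicit. Unset Printing Implicit Defensive.
Import Order.TTheory GRing.Theory Num.Theory.
Local Open Scope ring_scope.

Section Defs.
Variable R : rcfType.

Definition cmx n (A : 'M[R]_n) : 'M[R[i]]_n := map_mx (real_complex R) A.

(* principal submatrix A[K], rows/columns of K in increasing order *)
Definition principal_sub n (A : 'M[R]_n) (K : {set 'I_n}) : 'M[R]_#|K| :=
  mxsub (@enum_val _ (mem K)) (@enum_val _ (mem K)) A.

Lemma char_poly_splits n (A : 'M[R]_n) :
  exists s : seq R[i], char_poly (cmx A) == \prod_(z <- s) ('X - z%:P).
Proof.
have [s Hs] := closed_field_poly_normal (char_poly (cmx A)).
exists s; apply/eqP; rewrite {1}Hs.
by have /monicP -> := char_poly_monic (cmx A); rewrite scale1r.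
Qed.

(* the eigenvalues of A, listed with algebraic multiplicity *)
Definition eigs n (A : 'M[R]_n) : seq R[i] := xchoose (char_poly_splits A).

Definition inertia n (A : 'M[R]_n) : nat * nat * nat :=
  (count (fun z => Re z < 0) (eigs A),
   count (fun z => 0 < Re z) (eigs A),
   count (fun z => Re z == 0) (eigs A)).

Definition hurwitz_stable n (A : 'M[R]_n) : Prop :=
  forall z : R[i], eigenvalue (cmx A) z -> Re z < 0.

Definition hurwitz_unstable n (A : 'M[R]_n) : Prop :=
  exists z : R[i], eigenvalue (cmx A) z /\ 0 < Re z.

Definition P0minus n (A : 'M[R]_n) : Prop :=
  forall L : {set 'I_n}, \det (principal_sub A L) != 0 ->
    Num.sg (\det (principal_sub A L)) = (-1) ^+ #|L|.

Definition D_Hopf n (A : 'M[R]_n) : Prop :=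
  exists K' : {set 'I_n},
    principal_sub A K' \in unitmx /\
    exists D1 D2 : 'rV[R]_#|K'|,
      (forall j, 0 < D1 0 j) /\ (forall j, 0 < D2 0 j) /\
      inertia (principal_sub A K' *m diag_mx D1)
        <> inertia (principal_sub A K' *m diag_mx D2).
End Defs.

(* Let j be the index left out of the Hurwitz-stable principal submatrix B of
   M = A[K], and scale column j of M by e > 0.  The characteristic polynomial is
   affine in e, namely X c + e s with c = char B and s = char M - X c of degree
   < k; the P0^- signs give c(0) > 0 and s(0) = (-1)^k det M > 0.  A root x of
   X c + e s with Re x >= 0 satisfies |x| |c(x)| = e |s(x)|, and |c| grows like
   |x|^(k-1) on the closed right half-plane, so |x| = O(e).  For such small x the
   equation reads x (c(0) + O(|x| + e)) = - e s(0), forcing Re x < 0.  So for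
   small e the scaled matrix is Hurwitz stable, while M itself is unstable. *)

From HB Require Import structures.
From mathcomp Require Import all_boot all_order all_algebra.
From mathcomp Require Import complex.
From mathcomp Require Import reals.
From mathcomp Require Import fingroup perm ring lra.
Import Order.TTheory GRing.Theory Num.Theory.
Set Implicit Arguments. Unset Strict Implicit. Unset Printing Implicit Defensive.
Local Open Scope ring_scope.

Section ComplexEstimates.
Variable R : rcfType.
Implicit Types (x y l w : R[i]) (p c s : {poly R[i]}).
Local Notation Re := (@complex.Re R).
Local Notation normc := (@Normc.normc R).

Lemma normr_normc x : `|x| = (normc x)%:C%C.
Proof. by rewrite normc_def; case: x. Qed.

Lemma normc_ge0 x : 0 <= normc x.
Proof. by case: x => a b; apply: sqrtr_ge0. Qed.

Lemma normcR (r : R) : normc r%:C%C = `|r|.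
Proof. by rewrite /= expr0n addr0 sqrtr_sqr. Qed.

Lemma normcD x y : normc (x + y) <= normc x + normc y.
Proof. exact: le_normcD. Qed.

Lemma normcX x n : normc (x ^+ n) = normc x ^+ n.
Proof. by elim: n => [|n IH]; rewrite ?Normc.normc1 // !exprS Normc.normcM IH. Qed.

Lemma normc_sum (I : Type) (r : seq I) (F : I -> R[i]) :
  normc (\sum_(i <- r) F i) <= \sum_(i <- r) normc (F i).
Proof.
elim/big_rec2: _ => [|i y z _ le_yz]; first by rewrite Normc.normc0.
by apply: le_trans (normcD _ _) _; rewrite lerD2l.
Qed.

Lemma ReB x y : Re (x - y) = Re x - Re y.
Proof. by case: x; case: y. Qed.

Lemma Re_le_normc x : `|Re x| <= normc x.
Proof. by rewrite -lecR -normr_normc normc_ge_Re. Qed.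

Lemma normc_horner_le p x :
  normc p.[x] <= \sum_(i < size p) normc p`_i * normc x ^+ i.
Proof.
rewrite horner_coef; apply: le_trans (normc_sum _ _) _.
by apply: ler_sum => i _; rewrite Normc.normcM normcX.
Qed.

Lemma normc_horner_le1 p x :
  normc x <= 1 -> normc p.[x] <= \sum_(i < size p) normc p`_i.
Proof.
move=> x1; apply: le_trans (normc_horner_le p x) _; apply: ler_sum => i _.
by rewrite ler_piMr ?normc_ge0 ?exprn_ile1 ?normc_ge0.
Qed.

Lemma normc_horner_le_pow p x d : (size p <= d.+1)%N ->
  normc p.[x] <= (\sum_(i < size p) normc p`_i) * (1 + normc x) ^+ d.
Proof.
move=> szp; apply: le_trans (normc_horner_le p x) _; rewrite mulr_suml.
apply: ler_sum => i _; apply: ler_wpM2l; first exact: normc_ge0.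
have x0 := normc_ge0 x; have id : (i <= d)%N by rewrite -ltnS (leq_trans _ szp).
apply: le_trans (_ : (1 + normc x) ^+ i <= _).
  by apply: lerXn2r; rewrite ?nnegrE //; lra.
by rewrite -(subnK id) exprD ler_peMl ?exprn_ege1 ?exprn_ge0 //; lra.
Qed.

Lemma normc_subr_ge l x : Re l < 0 -> 0 <= Re x ->
  - Re l / (1 + normc l - Re l) * (1 + normc x) <= normc (x - l).
Proof.
move=> l_lt0 x_ge0.
have l0 := normc_ge0 l; have x0 := normc_ge0 x.
have ge_Re : - Re l <= normc (x - l).
  apply: le_trans (Re_le_normc _); apply: le_trans (ler_norm _).
  rewrite ReB; lra.
have ge_diff : normc x - normc l <= normc (x - l).
  by have := normcD (x - l) l; rewrite subrK; lra.
rewrite mulrAC ler_pdivrMr; last lra.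
have h1 : 0 <= (normc (x - l) + Re l) * (1 + normc l) by apply: mulr_ge0; lra.
have h2 : 0 <= - Re l * (normc (x - l) - normc x + normc l).
  by apply: mulr_ge0; lra.
nra.
Qed.

Lemma normc_prod_XsubC_ge rs : {in rs, forall l, Re l < 0} ->
  exists2 m : R, 0 < m & forall x, 0 <= Re x ->
    m * (1 + normc x) ^+ size rs <= normc (\prod_(l <- rs) (x - l)).
Proof.
elim: rs => [|l rs IH] rs_lt0.
  by exists 1 => // x _; rewrite big_nil Normc.normc1 mul1r.
have [|m m0 prod_ge] := IH; first by move=> l' l'rs; apply: rs_lt0; rewrite inE l'rs orbT.
have l_lt0 : Re l < 0 by apply: rs_lt0; rewrite mem_head.
have l0 := normc_ge0 l.
exists (- Re l / (1 + normc l - Re l) * m); first by rewrite mulr_gt0 ?divr_gt0 //; lra.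
move=> x x_ge0; rewrite big_cons Normc.normcM /= exprS mulrACA.
have x0 := normc_ge0 x.
apply: ler_pM;
  [|by rewrite mulr_ge0 ?exprn_ge0 //; lra|exact: normc_subr_ge|exact: prod_ge].
by rewrite mulr_ge0 ?divr_ge0 //; lra.
Qed.

Lemma normc_horner_stable_ge c : c \is monic -> (forall z, root c z -> Re z < 0) ->
  exists2 m : R, 0 < m & forall x, 0 <= Re x ->
    m * (1 + normc x) ^+ (size c).-1 <= normc c.[x].
Proof.
move=> /monicP c_monic c_stable.
have [rs] := closed_field_poly_normal c; rewrite c_monic scale1r => c_prod.
have [|m m0 prod_ge] := @normc_prod_XsubC_ge rs.
  by move=> l lrs; apply: c_stable; rewrite c_prod root_prod_XsubC.
exists m => // x x_ge0.
rewrite c_prod size_prod_XsubC horner_prod.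
by under eq_bigr do rewrite hornerXsubC; exact: prod_ge.
Qed.

Lemma perturbed_root_normc_le c s :
  c \is monic -> (forall z, root c z -> Re z < 0) -> (size s <= size c)%N ->
  exists2 K : R, 0 <= K & forall (e : R) x, 0 <= e -> 0 <= Re x ->
    x * c.[x] + e%:C%C * s.[x] = 0 -> normc x <= e * K.
Proof.
move=> c_monic c_stable szs.
have [m m0 c_ge] := normc_horner_stable_ge c_monic c_stable.
set S := \sum_(i < size s) normc s`_i.
have S0 : 0 <= S by apply: sumr_ge0 => i _; apply: normc_ge0.
exists (S / m); first by rewrite divr_ge0 //; lra.
move=> e x e0 x_ge0 root_x.
have x0 := normc_ge0 x.
have pow_gt0 : 0 < (1 + normc x) ^+ (size c).-1 by rewrite exprn_gt0 //; lra.
have normc_eq : normc x * normc c.[x] = e * normc s.[x].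
  have /(congr1 normc) : x * c.[x] = - (e%:C%C * s.[x]).
    by apply/eqP; rewrite -addr_eq0 root_x.
  by rewrite normcN !Normc.normcM normcR ger0_norm.
have bound_s : normc s.[x] <= S * (1 + normc x) ^+ (size c).-1.
  by apply: normc_horner_le_pow; rewrite prednK // size_poly_gt0 monic_neq0.
rewrite mulrA ler_pdivlMr // -(ler_pM2r pow_gt0) mulrAC -mulrA.
apply: le_trans (_ : normc x * normc c.[x] <= _).
  by rewrite ler_wpM2l // mulrC c_ge.
by rewrite normc_eq -mulrA ler_wpM2l.
Qed.

Lemma Re_lt0_of_mul_eqN x w (a : R) :
  0 < a -> 0 < Re w -> x * w = - a%:C%C -> Re x < 0.
Proof.
move=> a0 w0 xw.
have : Re x * normc w ^+ 2 = - a * Re w.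
  have /(congr1 (fun z => Re (z * w^*%C))) := xw.
  rewrite -mulrA -sqr_normc normr_normc -rmorphXn -rmorphN.
  by case: x {xw} => ? ?; case: w {w0} => ? ? /=; rewrite !mulr0 !mul0r !subr0.
have := normc_ge0 w; have : 0 < a * Re w by apply: mulr_gt0.
nra.
Qed.

Lemma horner_drop_poly1 p x : p.[x] = p.[0] + x * (drop_poly 1 p).[x].
Proof.
rewrite -{1}(poly_take_drop 1 p) hornerD hornerM hornerX mulrC horner_coef0.
by rewrite /take_poly horner_poly big_ord1 expr0 mulr1.
Qed.

Lemma small_perturbed_root_Re_lt0 c s (r0 r1 : R) :
  c.[0] = r0%:C%C -> 0 < r0 -> s.[0] = r1%:C%C -> 0 < r1 ->
  exists2 delta : R, 0 < delta & forall (e : R) x, 0 < e <= delta ->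
    normc x <= delta -> x * c.[x] + e%:C%C * s.[x] = 0 -> Re x < 0.
Proof.
move=> c0 r0_gt0 s0 r1_gt0.
set c1 := drop_poly 1 c; set s1 := drop_poly 1 s.
set C1 := \sum_(i < size c1) normc c1`_i; set S1 := \sum_(i < size s1) normc s1`_i.
have C10 : 0 <= C1 by apply: sumr_ge0 => i _; apply: normc_ge0.
have S10 : 0 <= S1 by apply: sumr_ge0 => i _; apply: normc_ge0.
pose delta := r0 / (1 + r0 + C1 + S1).
have delta_eq : delta * (1 + r0 + C1 + S1) = r0 by rewrite divfK //; apply/eqP; lra.
have delta0 : 0 < delta by rewrite divr_gt0 //; lra.
exists delta => // e x /andP[e0 e_le] x_le root_x.
have x0 := normc_ge0 x; have x1 : normc x <= 1 by nra.
set w := c.[0] + x * c1.[x] + e%:C%C * s1.[x].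
(* [x * w + e r1 = x c(x) + e s(x) = 0], and [w] is close to [c(0) = r0 > 0]. *)
apply: (@Re_lt0_of_mul_eqN x w (e * r1)); first exact: mulr_gt0.
  have : normc (w - c.[0]) <= delta * C1 + delta * S1.
    have -> : w - c.[0] = x * c1.[x] + e%:C%C * s1.[x] by rewrite /w; ring.
    apply: le_trans (normcD _ _) _.
    rewrite !Normc.normcM normcR (ger0_norm (ltW e0)).
    by apply: lerD; apply: ler_pM; rewrite ?normc_ge0 ?(ltW e0) ?normc_horner_le1.
  have := Re_le_normc (w - c.[0]); rewrite ReB c0 /= ler_norml.
  nra.
apply/eqP; rewrite -addr_eq0 -root_x (horner_drop_poly1 c) (horner_drop_poly1 s).
by rewrite -/c1 -/s1 s0 rmorphM /w /=; apply/eqP; ring.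
Qed.

Lemma Xc_perturbation_stable c s (r0 r1 : R) :
  c \is monic -> (forall z, root c z -> Re z < 0) -> (size s <= size c)%N ->
  c.[0] = r0%:C%C -> 0 < r0 -> s.[0] = r1%:C%C -> 0 < r1 ->
  exists2 eps : R, 0 < eps &
    forall x, x * c.[x] + eps%:C%C * s.[x] = 0 -> Re x < 0.
Proof.
move=> c_monic c_stable szs c0 r0_gt0 s0 r1_gt0.
have [K K0 root_small] := perturbed_root_normc_le c_monic c_stable szs.
have [delta delta0 near0_Re_lt0] := small_perturbed_root_Re_lt0 c0 r0_gt0 s0 r1_gt0.
have eps0 : 0 < delta / (1 + K) by rewrite divr_gt0 //; lra.
exists (delta / (1 + K)) => // x root_x.
rewrite ltNge; apply/negP => x_ge0.
have epsK : delta / (1 + K) * (1 + K) = delta by rewrite divfK //; apply/eqP; lra.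
suff : Re x < 0 by lra.
apply: (near0_Re_lt0 _ x _ _ root_x); first by rewrite eps0 /=; nra.
by apply: le_trans (root_small _ _ (ltW eps0) x_ge0 root_x) _; nra.
Qed.
End ComplexEstimates.

Lemma det_mxsub_inj (T : comNzRingType) m n (f : 'I_m -> 'I_n) (A : 'M[T]_n) :
  m = n -> injective f -> \det (mxsub f f A) = \det A.
Proof.
move=> mn; subst m => f_inj; pose s := perm f_inj.
have -> : mxsub f f A = perm_mx s *m A *m perm_mx s^-1.
  by rewrite -row_permE -col_permE; apply/matrixP => i j; rewrite !mxE !permE.
by rewrite !det_mulmx mulrAC -det_mulmx -perm_mxM mulgV perm_mx1 det1 mul1r.
Qed.

Lemma char_poly_mxsub_inj (T : comNzRingType) m n (f : 'I_m -> 'I_n) (A : 'M[T]_n) :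
  m = n -> injective f -> char_poly (mxsub f f A) = char_poly A.
Proof.
move=> mn f_inj; rewrite /char_poly -(det_mxsub_inj (char_poly_mx A) mn f_inj).
by congr (\det _); apply/matrixP => i j; rewrite !mxE (inj_eq f_inj).
Qed.

Section DiagonalScaling.
Variables (T : comNzRingType) (k : nat).
Implicit Types A : 'M[T]_k.

Definition diag_at (j : 'I_k) (e : T) : 'rV[T]_k := \row_i (if i == j then e else 1).

Lemma mulmx_diag_at1 A j : A *m diag_mx (diag_at j 1) = A.
Proof. by apply/matrixP => a b; rewrite mul_mx_diag !mxE if_same mulr1. Qed.

Lemma char_poly_mulmx_diag_at_affine A j e :
  char_poly (A *m diag_mx (diag_at j e)) =
  (1 - e)%:P * char_poly (A *m diag_mx (diag_at j 0)) + e%:P * char_poly A.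
Proof.
rewrite /char_poly -!(det_tr (char_poly_mx _)).
apply: (determinant_multilinear (i0 := j)).
- apply/rowP => l; rewrite !mul_mx_diag !mxE eqxx.
  case: (l == j); rewrite ?mulr1n ?mulr0n ?mulr0 ?mulr1 ?polyCB ?polyCM; ring.
- apply/matrixP => a b; rewrite !mul_mx_diag !mxE.
  by rewrite [lift j a == j]eq_sym (negbTE (neq_lift j a)).
- apply/matrixP => a b; rewrite !mul_mx_diag !mxE.
  by rewrite [lift j a == j]eq_sym (negbTE (neq_lift j a)) mulr1.
Qed.

Lemma char_poly_mulmx_diag_at0 A j :
  char_poly (A *m diag_mx (diag_at j 0)) = 'X * char_poly (row' j (col' j A)).
Proof.
rewrite /char_poly (expand_det_col _ j) (bigD1 j) //= big1 ?addr0.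
  rewrite /cofactor addnn -signr_odd odd_double expr0 mul1r row'_col'_char_poly_mx.
  have -> : row' j (col' j (A *m diag_mx (diag_at j 0))) = row' j (col' j A).
    apply/matrixP => a b; rewrite mul_mx_diag !mxE.
    by rewrite [lift j b == j]eq_sym (negbTE (neq_lift j b)) mulr1.
  by rewrite mul_mx_diag !mxE !eqxx mulr0 subr0.
move=> i ij; rewrite mul_mx_diag !mxE (negbTE ij) eqxx.
by rewrite mulr0n mulr0 subr0 mul0r.
Qed.

Lemma char_poly_mulmx_diag_at A j e :
  char_poly (A *m diag_mx (diag_at j e)) =
  'X * char_poly (row' j (col' j A)) +
  e%:P * (char_poly A - 'X * char_poly (row' j (col' j A))).
Proof.
rewrite char_poly_mulmx_diag_at_affine char_poly_mulmx_diag_at0 polyCB.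
by ring.
Qed.

End DiagonalScaling.

Lemma size_subr_monic (T : nzRingType) (p q : {poly T}) :
  p \is monic -> q \is monic -> size p = size q -> (size (p - q)%R < size p)%N.
Proof.
move=> /monicP p1 /monicP q1 pq.
have p0 : (0 < size p)%N by rewrite size_poly_gt0 -lead_coef_eq0 p1 oner_eq0.
rewrite -(prednK p0) ltnS; apply/leq_sizeP => i; rewrite leq_eqVlt coefB.
case/predU1P => [<-|lt_i]; first by rewrite -lead_coefE pq -lead_coefE p1 q1 subrr.
rewrite (prednK p0) in lt_i; by rewrite !nth_default ?subrr // -pq.
Qed.

Lemma setC1_of_card (T : finType) (L : {set T}) :
  #|L|.+1 = #|T| -> exists j, L = [set~ j].
Proof.
move=> cardL; have /cards1P[j Lj] : #|~: L| == 1%N.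
  by apply/eqP; have := cardsC L; rewrite -cardL => /eqP; rewrite -addn1 eqn_add2l => /eqP.
by exists j; rewrite -Lj setCK.
Qed.

Section HurwitzPerturbation.
Variable R : rcfType.

Lemma ReC_lt0 (z : R[i]) : (Re z < 0) = (complex.Re z < 0).
Proof. by rewrite -complexRe ltcE /= eqxx. Qed.

Lemma ReC_gt0 (z : R[i]) : (0 < Re z) = (0 < complex.Re z).
Proof. by rewrite -complexRe ltcE /= eqxx. Qed.

Lemma hurwitz_stableP n (A : 'M[R]_n) :
  hurwitz_stable A <-> forall z, root (char_poly (cmx A)) z -> complex.Re z < 0.
Proof.
by split=> stA z; [rewrite -eigenvalue_root_char -ReC_lt0; apply: stA
                  |rewrite eigenvalue_root_char ReC_lt0; apply: stA].
Qed.

Lemma mem_eigs n (A : 'M[R]_n) z : (z \in eigs A) = root (char_poly (cmx A)) z.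
Proof.
have := xchooseP (char_poly_splits A); rewrite -/(eigs A).
by move: (eigs A) => s /eqP ->; rewrite root_prod_XsubC.
Qed.

Lemma inertia_unstable_stable n (A B : 'M[R]_n) :
  hurwitz_unstable A -> hurwitz_stable B -> inertia A <> inertia B.
Proof.
move=> [z [eig_z Re_z]] /hurwitz_stableP stB /(congr1 (fun t => t.1.2)).
rewrite /inertia /= => eq_pos.
have : has (fun z => 0 < Re z) (eigs A).
  by apply/hasP; exists z; first rewrite mem_eigs -eigenvalue_root_char.
rewrite has_count eq_pos -has_count => /hasP[w]; rewrite mem_eigs ReC_gt0.
by move=> /stB; lra.
Qed.

Lemma hurwitz_unstable_gt0 n (A : 'M[R]_n) : hurwitz_unstable A -> (0 < n)%N.
Proof. by case: n A => // A [z []]; rewrite /eigenvalue flatmx0 eqxx. Qed.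

Lemma P0minus_minor_gt0 n (A : 'M[R]_n) (L : {set 'I_n}) :
  P0minus A -> \det (principal_sub A L) != 0 ->
  0 < (-1) ^+ #|L| * \det (principal_sub A L).
Proof.
move=> P0A det0; rewrite [X in _ * X]numEsg (P0A L det0) mulrA -expr2 sqrr_sign.
by rewrite mul1r normr_gt0.
Qed.

Lemma det_principal_subT n (A : 'M[R]_n) : \det (principal_sub A [set: 'I_n]) = \det A.
Proof. by apply: det_mxsub_inj; [rewrite cardsT card_ord | exact: enum_val_inj]. Qed.

Lemma row'_col'_principal_sub k (M : 'M[R]_k) (j : 'I_k) :
  exists2 g : 'I_k.-1 -> 'I_#|[set~ j]|, injective g &
    row' j (col' j M) = mxsub g g (principal_sub M [set~ j]).
Proof.
have inL t : lift j t \in [set~ j] by rewrite !inE eq_sym neq_lift.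
pose g t := enum_rank_in (inL t) (lift j t).
have gE t : enum_val (g t) = lift j t by rewrite enum_rankK_in.
exists g; first by move=> a b /(congr1 enum_val); rewrite !gE => /lift_inj.
by apply/matrixP => a b; rewrite !mxE !gE.
Qed.

Lemma char_poly_principal_sub_setC1 k (M : 'M[R]_k) (j : 'I_k) :
  char_poly (cmx (principal_sub M [set~ j])) = char_poly (cmx (row' j (col' j M))).
Proof.
have [g g_inj ->] := row'_col'_principal_sub M j.
have card_setC1 : k.-1 = #|[set~ j]| by rewrite cardsC1 card_ord.
by rewrite /cmx [in RHS]map_mxsub (char_poly_mxsub_inj _ card_setC1 g_inj).
Qed.

Lemma det_principal_sub_setC1 k (M : 'M[R]_k) (j : 'I_k) :
  \det (principal_sub M [set~ j]) = \det (row' j (col' j M)).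
Proof.
have [g g_inj ->] := row'_col'_principal_sub M j.
have card_setC1 : k.-1 = #|[set~ j]| by rewrite cardsC1 card_ord.
by rewrite (det_mxsub_inj _ card_setC1 g_inj).
Qed.

Lemma cmx_mulmx_diag_at k (M : 'M[R]_k) (j : 'I_k) (e : R) :
  cmx (M *m diag_mx (diag_at j e)) = cmx M *m diag_mx (diag_at j e%:C%C).
Proof.
rewrite /cmx map_mxM map_diag_mx; congr (_ *m diag_mx _).
by apply/rowP => i; rewrite !mxE; case: ifP; rewrite ?rmorph1.
Qed.

Theorem P0minus_diag_at_stable k (M : 'M[R]_k) (j : 'I_k) :
  M \in unitmx -> P0minus M -> hurwitz_stable (principal_sub M [set~ j]) ->
  exists2 eps : R, 0 < eps & hurwitz_stable (M *m diag_mx (diag_at j eps)).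
Proof.
move=> M_unit P0M /hurwitz_stableP stB.
have k0 : (0 < k)%N by apply: leq_ltn_trans (ltn_ord j).
set M' := row' j (col' j M); set c := char_poly (cmx M'); set p := char_poly (cmx M).
have c_stable z : root c z -> complex.Re z < 0.
  by rewrite /c -char_poly_principal_sub_setC1; apply: stB.
have c0 : c.[0] = ((-1) ^+ k.-1 * \det M')%:C%C.
  by rewrite horner_coef0 char_poly_det /cmx det_map_mx rmorphM rmorph_sign.
have r0_gt0 : 0 < (-1) ^+ k.-1 * \det M'.
  have card_setC1 : #|[set~ j]| = k.-1 by rewrite cardsC1 card_ord.
  rewrite -det_principal_sub_setC1 -card_setC1 P0minus_minor_gt0 //.
  apply/eqP => det0; have := c_stable 0.
  by rewrite /root c0 -det_principal_sub_setC1 det0 mulr0 eqxx ltxx => /(_ isT).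
have r1_gt0 : 0 < (-1) ^+ k * \det M.
  have detT0 : \det (principal_sub M [set: 'I_k]) != 0.
    by rewrite det_principal_subT -unitfE -unitmxE.
  by have := P0minus_minor_gt0 P0M detT0; rewrite det_principal_subT cardsT card_ord.
set s := p - 'X * c.
have s0 : s.[0] = ((-1) ^+ k * \det M)%:C%C.
  rewrite /s hornerD hornerN hornerM hornerX mul0r subr0 horner_coef0.
  by rewrite char_poly_det /cmx det_map_mx rmorphM rmorph_sign.
have szs : (size s <= size c)%N.
  have Xc_monic : 'X * c \is monic by rewrite monicMl ?monicX ?char_poly_monic.
  have size_c : size c = k by rewrite size_char_poly prednK.
  have size_p : size p = k.+1 by rewrite size_char_poly.
  have size_Xc : size p = size ('X * c).
    by rewrite mulrC size_mulX ?monic_neq0 ?char_poly_monic // size_c.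
  by rewrite -ltnS size_c -size_p size_subr_monic ?char_poly_monic.
have [eps eps0 eps_stable] := Xc_perturbation_stable (char_poly_monic _) c_stable szs
  c0 r0_gt0 s0 r1_gt0.
exists eps => //; apply/hurwitz_stableP => z.
rewrite cmx_mulmx_diag_at char_poly_mulmx_diag_at /cmx -map_col' -map_row' -/(cmx M').
rewrite -/c -/p -/s /root hornerD !hornerM hornerX !hornerC => /eqP.
exact: eps_stable.
Qed.

End HurwitzPerturbation.

Theorem mainTheorem8 (R : realType) (n : nat) (A : 'M[R]_n) (K : {set 'I_n}) :
  principal_sub A K \in unitmx ->
  hurwitz_unstable (principal_sub A K) ->
  P0minus (principal_sub A K) ->
  (exists L : {set 'I_#|K|},
      #|L| = (#|K| - 1)%N /\ hurwitz_stable (principal_sub (principal_sub A K) L)) ->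
  D_Hopf A.
Proof.
move=> M_unit M_unstable P0M [L [cardL L_stable]].
have k0 := hurwitz_unstable_gt0 M_unstable.
have [j Lj] : exists j, L = [set~ j].
  by apply: setC1_of_card; rewrite cardL card_ord subn1 prednK.
subst L.
have [eps eps0 eps_stable] := P0minus_diag_at_stable M_unit P0M L_stable.
exists K; split=> //; exists (diag_at j 1), (diag_at j eps).
split; first by move=> i; rewrite mxE; case: ifP.
split; first by move=> i; rewrite mxE; case: ifP.
by rewrite mulmx_diag_at1; apply: inertia_unstable_stable.
Qed.
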